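(* Let $\mathcal V$ be an operator space and $\mathcal D'\subseteq\mathcal D$ an inclusion of noncommutative domains in $\mathcal V_{\rm nc}$ such that $M:=\sup_{n}\sup_{x\in\mathcal D'_n}\|x\|<+\infty$ and $m:=\inf_{n}\inf\{\|x-w\|\colon x\in\mathcal D'_n,\ w\in\mathcal V^{n\times n}\setminus\mathcal D_n\}>0$, and let $k\in[0,1)$ be a constant with $k\,\tilde\delta_{\mathcal D'}\ge\tilde\delta_{\mathcal D}$ on each level of $\mathcal D'$ (such $k$ exists, e.g. $k=M/(m+M)$). Then $k\,\tilde d_{\mathcal D'}(a,c)\ge\tilde d_{\mathcal D}(a,c)$ for all $n$ and $a,c\in\mathcal D'_n$.
   Context: A noncommutative domain is a family of open sets $\mathcal D_n\subseteq\mathcal V^{n\times n}$ closed under direct sums. $\delta_{\mathcal D}(a,c)(b)=\big[\sup\{t\in[0,+\infty]\colon\begin{bmatrix}a&sb\\0&c\end{bmatrix}\in\mathcal D_{n+m}\ \forall s\in[0,t]\}\big]^{-1}$ ($1/0=+\infty,1/\infty=0$), $\tilde\delta_{\mathcal D}(a,c)=\delta_{\mathcal D}(a,c)(a-c)$, and $\tilde d_{\mathcal D}(a,c)=\inf\{\sum_{j=1}^N\tilde\delta_{\mathcal D}(a_{j-1},a_j)\colon N\in\mathbb N,\ a_0=a,a_N=c,\ a_j\in\mathcal D_n\}$; likewise for $\mathcal D'$ (with divisions in $\mathcal D'_n$). *)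

From HB Require Import structures.
From mathcomp Require Import all_boot all_order all_algebra.
From mathcomp Require Import complex.
From mathcomp Require Import boolp classical_sets reals constructive_ereal ereal.
Set Implicit Arguments. Unset Strict Implicit. Unset Printing Implicit Defensive.
Import Order.TTheory GRing.Theory Num.Theory.
Local Open Scope ring_scope.
Local Open Scope classical_set_scope.

Section OpSpace.
Variable R : realType.
Local Notation C := (complex R).

Definition vnorm n (v : 'cV[C]_n) : R :=
  Num.sqrt (\sum_(i < n) (ComplexField.Normc.normc (v i 0)) ^+ 2).

Definition opnorm n m (alpha : 'M[C]_(n, m)) : R :=
  sup [set vnorm (alpha *m v) | v in [set v : 'cV[C]_m | vnorm v <= 1]].

Variable V : lmodType C.

Definition smulmx m n p (alpha : 'M[C]_(m, n)) (x : 'M[V]_(n, p)) : 'M[V]_(m, p) :=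
  \matrix_(i, j) \sum_(k < n) alpha i k *: x k j.
Definition mulsmx m n p (x : 'M[V]_(m, n)) (beta : 'M[C]_(n, p)) : 'M[V]_(m, p) :=
  \matrix_(i, j) \sum_(k < n) beta k j *: x i k.

Definition dsum n m (x : 'M[V]_n) (y : 'M[V]_m) : 'M[V]_(n + m) :=
  block_mx x 0 0 y.

Record opSpace := OpSpace {
  nrm : forall n, 'M[V]_n -> R;
  nrm_ge0 : forall n (x : 'M[V]_n), 0 <= nrm x;
  nrm_eq0 : forall n (x : 'M[V]_n), nrm x = 0 -> x = 0;
  nrm_triangle : forall n (x y : 'M[V]_n), nrm (x + y) <= nrm x + nrm y;
  nrm_scale : forall n (c : C) (x : 'M[V]_n),
      nrm (map_mx (fun v => c *: v) x) = ComplexField.Normc.normc c * nrm x;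
  ruan1 : forall n m (x : 'M[V]_n) (y : 'M[V]_m),
      nrm (dsum x y) = Num.max (nrm x) (nrm y);
  ruan2 : forall n m (alpha : 'M[C]_(m, n)) (x : 'M[V]_n) (beta : 'M[C]_(n, m)),
      nrm (mulsmx (smulmx alpha x) beta) <= opnorm alpha * nrm x * opnorm beta
}.

Variable os : opSpace.

Definition nc_domain (D : forall n, set 'M[V]_n) : Prop :=
  (forall n, (0 < n)%N -> forall x, D n x ->
     exists2 e : R, 0 < e & forall y, nrm os (y - x) < e -> D n y)
  /\ (forall n m (x : 'M[V]_n) (y : 'M[V]_m), (0 < n)%N -> (0 < m)%N ->
        D n x -> D m y -> D (n + m)%N (dsum x y)).

Definition einv (x : \bar R) : \bar R :=
  if x == 0%E then +oo%E else if x == +oo%E then 0%E else ((fine x)^-1)%:E.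

Definition delta (D : forall n, set 'M[V]_n) n m
    (a : 'M[V]_n) (c : 'M[V]_m) (b : 'M[V]_(n, m)) : \bar R :=
  einv (ereal_sup [set t : \bar R | (0 <= t)%E /\
     forall s : R, 0 <= s -> (s%:E <= t)%E ->
       D (n + m)%N (block_mx a (map_mx (fun v => (s%:C)%C *: v) b) 0 c)]).

Definition delta_t (D : forall n, set 'M[V]_n) n (a c : 'M[V]_n) : \bar R :=
  delta D a c (a - c).

Definition d_t (D : forall n, set 'M[V]_n) n (a c : 'M[V]_n) : \bar R :=
  ereal_inf [set S : \bar R | exists (N : nat) (f : nat -> 'M[V]_n),
     [/\ f 0%N = a, f N = c, (forall j, (j <= N)%N -> D n (f j)) &
         S = (\sum_(1 <= j < N.+1) delta_t D (f j.-1) (f j))%E]].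

End OpSpace.

From HB Require Import structures.
From mathcomp Require Import all_boot all_order all_algebra.
From mathcomp Require Import complex.
From mathcomp Require Import boolp classical_sets reals constructive_ereal ereal.
Set Implicit Arguments. Unset Strict Implicit. Unset Printing Implicit Defensive.
Import Order.TTheory GRing.Theory Num.Theory.
Local Open Scope ring_scope.
Local Open Scope classical_set_scope.

(* A chain a = f 0, ..., f N = c in D' is also a chain in D, and by the
   hypothesis on k each of its D-steps costs at most k times its D'-step.
   Hence d_t D a c is at most k times the D'-length of every D'-chain from a to
   c, and taking the infimum over these chains gives the claim. *)

Section ExtendedReals.
Variable R : realType.
Local Open Scope ereal_scope.

Lemma fine_ereal_sup_ge0 (S : set (\bar R)) :
  (forall t, S t -> 0 <= t) -> (0 <= fine (ereal_sup S))%R.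
Proof.
move=> S_ge0; have [->|/set0P[t St]] := eqVneq S set0.
  by rewrite ereal_sup0.
exact/fine_ge0/(le_trans (S_ge0 t St) (ereal_sup_ubound St)).
Qed.

Lemma einv_ge0 (x : \bar R) : (0 <= fine x)%R -> 0 <= einv x.
Proof.
move=> x_ge0; rewrite /einv; case: eqP => // _; case: eqP => // _.
by rewrite lee_fin invr_ge0.
Qed.

Lemma lb_ereal_infZl (S : set (\bar R)) (k : R) (x : \bar R) :
  (0 <= k)%R -> S !=set0 -> (forall s, S s -> x <= k%:E * s) ->
  x <= k%:E * ereal_inf S.
Proof.
move=> k_ge0 [s0 Ss0] x_le; have [k_gt0|k_eq0] := ltrP 0 k.
  rewrite -ereal_inf_pZl //; apply: le_ereal_inf_tmp => _ [s Ss <-].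
  exact: x_le.
have k0 : k = 0%R by apply/eqP; rewrite eq_le k_eq0 k_ge0.
by have := x_le s0 Ss0; rewrite k0 !mul0e.
Qed.

End ExtendedReals.

Section Chains.
Variables (R : realType) (V : lmodType (complex R)).
Implicit Types (D : forall n, set 'M[V]_n) (k : R).
Local Open Scope ereal_scope.

Lemma delta_t_ge0 D n (a c : 'M[V]_n) : 0 <= delta_t D a c.
Proof. by apply/einv_ge0/fine_ereal_sup_ge0 => t []. Qed.

Definition chain_length D n (f : nat -> 'M[V]_n) N : \bar R :=
  \sum_(1 <= j < N.+1) delta_t D (f j.-1) (f j).

Definition chain_lengths D n (a c : 'M[V]_n) : set (\bar R) :=
  [set S | exists N f, [/\ f 0%N = a, f N = c,
     (forall j, (j <= N)%N -> D n (f j)) & S = chain_length D f N]].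

Lemma d_tE D n (a c : 'M[V]_n) : d_t D a c = ereal_inf (chain_lengths D a c).
Proof. by []. Qed.

Lemma chain_lengths_neq0 D n (a c : 'M[V]_n) :
  D n a -> D n c -> chain_lengths D a c !=set0.
Proof.
move=> Da Dc; exists (chain_length D (fun j => if j == 0%N then a else c) 1).
by exists 1%N, (fun j => if j == 0%N then a else c); split => // -[|j].
Qed.

Lemma d_t_le_chain_length D n (f : nat -> 'M[V]_n) N :
  (forall j, (j <= N)%N -> D n (f j)) ->
  d_t D (f 0%N) (f N) <= chain_length D f N.
Proof. by move=> fD; apply: ereal_inf_lbound; exists N, f. Qed.

Lemma chain_length_le_scale D D' k n (f : nat -> 'M[V]_n) N : (0 <= k)%R ->
  (forall j, (0 < j <= N)%N ->
     delta_t D (f j.-1) (f j) <= k%:E * delta_t D' (f j.-1) (f j)) ->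
  chain_length D f N <= k%:E * chain_length D' f N.
Proof.
move=> k_ge0 step_le; rewrite /chain_length ge0_sume_distrr; last first.
  by move=> j _; exact: delta_t_ge0.
rewrite big_seq [leRHS]big_seq; apply: lee_sum => j.
by rewrite mem_index_iota ltnS; exact: step_le.
Qed.

End Chains.

Theorem corollary5p4 (R : realType) (V : lmodType (complex R)) (os : opSpace V)
  (D D' : forall n, set 'M[V]_n)
  (hD : nc_domain os D) (hD' : nc_domain os D')
  (hsub : forall n, (0 < n)%N -> D' n `<=` D n)
  (hM : (ereal_sup [set r : \bar R | exists n (x : 'M[V]_n),
           [/\ (0 < n)%N, D' n x & r = (nrm os x)%:E]] < +oo)%E)
  (hm : (0 < ereal_inf [set r : \bar R | exists n (x w : 'M[V]_n),
           [/\ (0 < n)%N, D' n x, ~ D n w & r = (nrm os (x - w))%:E]])%E)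
  (k : R) (hk0 : 0 <= k) (hk1 : k < 1)
  (hk : forall n, (0 < n)%N -> forall a c : 'M[V]_n, D' n a -> D' n c ->
          (k%:E * delta_t D' a c >= delta_t D a c)%E) :
  forall n, (0 < n)%N -> forall a c : 'M[V]_n, D' n a -> D' n c ->
    (k%:E * d_t D' a c >= d_t D a c)%E.
Proof.
move=> n n_gt0 a c D'a D'c; rewrite [d_t D' a c]d_tE.
apply: lb_ereal_infZl => //; first exact: chain_lengths_neq0.
move=> _ [N [f [<- <- fD' ->]]].
have fD j : (j <= N)%N -> D n (f j) by move=> /fD'; exact: hsub.
apply: le_trans (d_t_le_chain_length fD) _.
apply: chain_length_le_scale => // j /andP[_ jN].
by apply: hk => //; apply: fD' => //; exact: leq_trans (leq_pred j) jN.
Qed.
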